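(* Let $G$ be a finite group of odd order. Then $\mathrm{cp}(G)\geq\lambda_3(G)^2$.
   Context: For an integer $e$ and a finite group $G$, $\lambda_e(G)$ denotes the maximum over all automorphisms $\alpha$ of $G$ of $|\{g\in G:\alpha(g)=g^e\}|/|G|$. $\mathrm{cp}(G)$ denotes the commuting probability of $G$, i.e. $|\{(x,y)\in G^2: xy=yx\}|/|G|^2$. *)

From HB Require Import structures.
From mathcomp Require Import all_boot all_order all_algebra all_fingroup all_solvable.
Set Implicit Arguments. Unset Strict Implicit. Unset Printing Implicit Defensive.
Import Order.TTheory GRing.Theory Num.Theory.
Local Open Scope ring_scope.

(* Automorphisms of G are elements of Aut G : {set {perm gT}} (permutations of
   gT that restrict to automorphisms of G and fix everything outside G). *)

Definition gpowz (gT : finGroupType) (g : gT) (e : int) : gT :=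
  match e with
  | Posz n => (g ^+ n)%g
  | Negz n => ((g ^+ n.+1)^-1)%g
  end.

Definition fixpow_count (gT : finGroupType) (G : {set gT}) (e : int)
    (a : {perm gT}) : nat :=
  #|[set g in G | a g == gpowz g e]|.

Definition lambda (gT : finGroupType) (G : {group gT}) (e : int) : rat :=
  \big[Num.max/0]_(a in Aut G) ((fixpow_count G e a)%:R / (#|G|)%:R : rat).

Definition cp (gT : finGroupType) (G : {group gT}) : rat :=
  (#|[set xy in setX G G | (xy.1 * xy.2 == xy.2 * xy.1)%g]|)%:R / ((#|G| ^ 2)%N)%:R.

From HB Require Import structures.
From mathcomp Require Import all_boot all_order all_algebra all_fingroup all_solvable.
Import Order.TTheory GRing.Theory Num.Theory.

Set Implicit Arguments. Unset Strict Implicit. Unset Printing Implicit Defensive.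

(* Fix an automorphism a, let S = {g | a g = g^(e+1)} and F = {g | a g = g},
   with e coprime to |G| (e = 2 for lambda_3 in odd order).  For f in F and
   y in S, (f y)^-1 a (f y) = y^e, and g |-> g^e is injective, so (y, f) |-> f y
   embeds S x F into G: |S| |F| <= |G|.  If s^h lies in S for some s in S, then
   h (a h)^-1 centralises s^(e+1) = a s, whose centraliser a (C(s)) has the size
   of C(s); the fibres of h |-> h (a h)^-1 are cosets of F, so at most
   |F| |C(x)| elements conjugate a given x into S.  Counting the pairs (x, h)
   with x^h in S gives |G| |S| <= |F| sum_x |C(x)|, hence
   |G| |S|^2 <= |G| sum_x |C(x)| = |G|^3 cp(G). *)

Local Open Scope group_scope.

Lemma card_commuting_pairs (gT : finGroupType) (G : {group gT}) :
  #|[set xy in setX G G | xy.1 * xy.2 == xy.2 * xy.1]| = (\sum_(x in G) #|'C_G[x]|)%N.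
Proof.
rewrite -sum1_card (eq_bigr (fun x => \sum_(c in 'C_G[x]) 1)%N) => [|x _]; last first.
  by rewrite sum1_card.
rewrite pair_big_dep /=; apply: eq_bigl => -[x c].
by rewrite in_setI cent1E !inE /= [c * x == _]eq_sym andbA.
Qed.

Section AutomorphismPowerMap.

Variables (gT : finGroupType) (G : {group gT}) (a : {perm gT}).
Hypothesis autGa : a \in Aut G.

Lemma aut_morphM : {in G &, {morph a : x y / x * y}}.
Proof. exact/morphicP/Aut_morphic. Qed.

Lemma aut_morphV : {in G, {morph a : x / x^-1}}.
Proof. by move=> x Gx; rewrite -(autmE autGa) morphV. Qed.

Lemma aut_morphJ : {in G &, {morph a : x y / x ^ y}}.
Proof. by move=> x y Gx Gy; rewrite -(autmE autGa) morphJ. Qed.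

Definition aut_fix := [set g in G | a g == g].

Lemma card_twist_preim (D : {set gT}) :
  (#|[set h in G | (h * (a h)^-1)%g \in D]| <= #|aut_fix| * #|D|)%N.
Proof.
rewrite -sum1_card (partition_big (fun h => h * (a h)^-1) (mem D)); last first.
  by move=> h; rewrite inE => /andP[].
rewrite mulnC -sum_nat_const; apply: leq_sum => d _; rewrite sum1dep_card.
set B := [set _ | _].
have [->|/set0Pn[h0]] := eqVneq B set0; first by rewrite cards0.
rewrite !inE => /andP[/andP[Gh0 _] /eqP h0d].
rewrite -(card_lcoset aut_fix h0); apply/subset_leq_card/subsetP => h.
rewrite !inE mem_lcoset => /andP[/andP[Gh _] /eqP hd].
rewrite !inE groupM ?groupV //= aut_morphM ?groupV // aut_morphV //.
have : h0^-1 * (h * (a h)^-1) * a h = h0^-1 * (h0 * (a h0)^-1) * a h by rewrite hd h0d.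
by rewrite -mulgA mulgKV mulKg => ->.
Qed.

Variable e : nat.

Definition aut_pow := [set g in G | a g == g ^+ e.+1].

Lemma aut_pow_subset : aut_pow \subset G.
Proof. by apply/subsetP => g; rewrite inE => /andP[]. Qed.

Lemma card_aut_pow_fix : coprime #|G| e -> (#|aut_pow| * #|aut_fix| <= #|G|)%N.
Proof.
move=> coGe; rewrite -cardsX -(@card_in_imset _ _ (fun p => p.2 * p.1)).
  apply/subset_leq_card/subsetP => z /imsetP[[y f]].
  by rewrite !inE /= => /andP[/andP[Gy _] /andP[Gf _]] ->; rewrite groupM.
have twist_pow u v : u \in aut_fix -> v \in aut_pow -> (u * v)^-1 * a (u * v) = v ^+ e.
  rewrite !inE => /andP[Gu /eqP au] /andP[Gv /eqP av].
  by rewrite aut_morphM // au av invMg -mulgA mulKg expgS mulKg.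
move=> [y f] [y' f']; rewrite !in_setX /= => /andP[powy fixf] /andP[powy' fixf'] eqfy.
have [Gy Gy'] := (subsetP aut_pow_subset y powy, subsetP aut_pow_subset y' powy').
have eqy : y = y'.
  apply: (can_in_inj (expgK coGe)) => //.
  by rewrite -(twist_pow f y) // eqfy twist_pow.
by move: eqfy; rewrite eqy => /mulIg ->.
Qed.

Lemma card_cent_aut_pow s : s \in aut_pow -> #|'C_G[s ^+ e.+1]| = #|'C_G[s]|.
Proof.
rewrite inE => /andP[Gs /eqP <-]; rewrite -(autmE autGa) -{1}(im_autm autGa).
rewrite -injm_cent1 ?injm_autm // -morphimIdom card_injm ?subsetIl //.
exact: injm_autm.
Qed.

Definition conj_into (x : gT) := [set g in G | x ^ g \in aut_pow].

Lemma card_conj_into_aut_pow s :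
  s \in aut_pow -> (#|conj_into s| <= #|aut_fix| * #|'C_G[s]|)%N.
Proof.
move=> pows; rewrite -card_cent_aut_pow //; apply: leq_trans (card_twist_preim _).
have [Gs /eqP as_pow] := setIdP pows.
apply/subset_leq_card/subsetP => h; rewrite !inE => /andP[Gh /andP[_ /eqP powsh]].
rewrite Gh groupM ?groupV ?Aut_closed //=.
move: powsh; rewrite aut_morphJ // as_pow -conjXg => eq_conj.
by rewrite conjg_set1 sub1set inE conjgM -eq_conj conjgK.
Qed.

Lemma conj_into_conj x g : g \in G -> conj_into x = g *: conj_into (x ^ g).
Proof.
move=> Gg; apply/setP => h; rewrite mem_lcoset !in_set -conjgM mulKVg.
by rewrite (groupMl h (groupVr Gg)).
Qed.

Lemma card_conj_into x : (#|conj_into x| <= #|aut_fix| * #|'C_G[x]|)%N.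
Proof.
have [->|/set0Pn[g]] := eqVneq (conj_into x) set0; first by rewrite cards0.
rewrite inE => /andP[Gg powxg]; rewrite (conj_into_conj x Gg) card_lcoset.
have -> : #|'C_G[x]| = #|'C_G[x ^ g]|.
  by rewrite cent1J -{2}(conjGid Gg) -conjIg cardJg.
exact: card_conj_into_aut_pow.
Qed.

Lemma sum_card_conj_into : (\sum_(x in G) #|conj_into x| = #|G| * #|aut_pow|)%N.
Proof.
rewrite -sum_nat_const (eq_bigr (fun x => \sum_(g in G) ((x ^ g)%g \in aut_pow) : nat)%N).
  rewrite exchange_big; apply: eq_bigr => g Gg /=.
  rewrite -(cardJg aut_pow g^-1) -sum1_card big_mkcond [RHS]big_mkcond /=.
  apply: eq_bigr => x _; rewrite mem_conjgV.
  case powxg: (x ^ g \in aut_pow); last by case: (x \in G).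
  by rewrite -(groupJr x Gg) (subsetP aut_pow_subset).
move=> x _; rewrite -sum1_card big_mkcond [RHS]big_mkcond /=.
by apply: eq_bigr => g _; rewrite inE; case: (g \in G).
Qed.

Lemma card_aut_pow_sqr :
  coprime #|G| e -> (#|aut_pow| ^ 2 <= \sum_(x in G) #|'C_G[x]|)%N.
Proof.
move=> coGe; rewrite -(@leq_pmul2l #|G|) ?cardG_gt0 // big_distrr /=.
rewrite expnS expn1 mulnA (mulnC #|G|) -mulnA -sum_card_conj_into big_distrr /=.
apply: leq_sum => x _; apply: leq_trans (leq_mul (leqnn _) (card_conj_into x)) _.
by rewrite mulnA leq_mul2r card_aut_pow_fix ?orbT.
Qed.

End AutomorphismPowerMap.

Local Close Scope group_scope.
Local Open Scope ring_scope.

Lemma fixpow_ratio_sqr_le_cp (gT : finGroupType) (G : {group gT}) a :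
  odd #|G| -> a \in Aut G -> ((fixpow_count G 3 a)%:R / #|G|%:R) ^+ 2 <= cp G.
Proof.
move=> oddG autGa; rewrite /cp expr_div_n -!natrX.
apply: ler_wpM2r; first by rewrite invr_ge0 ler0n.
rewrite ler_nat card_commuting_pairs.
by apply: (card_aut_pow_sqr autGa); rewrite coprimen2.
Qed.

Theorem proposition7 (gT : finGroupType) (G : {group gT}) :
  odd #|G| -> lambda G 3 ^+ 2 <= cp G.
Proof.
move=> oddG; rewrite /lambda.
have ratio_ge0 a : a \in Aut G -> 0 <= (fixpow_count G 3 a)%:R / #|G|%:R :> rat.
  by move=> _; rewrite divr_ge0 ?ler0n.
have [a autGa ->] := eq_bigmax 1%g _ _ (group1 (Aut G)) ratio_ge0.
exact: fixpow_ratio_sqr_le_cp.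
Qed.
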